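(* Consider an insertion-only edge stream, an integer $M\ge 6$, and the reservoir sample $\mathcal{S}$ of capacity $M$ (as described in the context). For a time $t$ let $\tau^{(t)}$ be the number of triangles of $G^{(t)}$ all of whose edges lie in $\mathcal{S}$ at the end of time step $t$, and let $\phi^{(t)}=\frac{t(t-1)(t-2)}{M(M-1)(M-2)}\tau^{(t)}$ and $\phi_{\mathrm{mix}}^{(t)}=\left(\frac{t}{M}\right)^3\tau^{(t)}$. Then for any $t>M$, \[ \left|\phi^{(t)}-\phi_{\mathrm{mix}}^{(t)}\right|\le\phi_{\mathrm{mix}}^{(t)}\frac{4}{M-2}. \]
   Context: An insertion-only edge stream: at each time step $s=1,2,\dots$ an edge $e_s$ between two distinct vertices arrives, which is not already present; $G^{(t)}$ has edge set $\{e_1,\dots,e_t\}$. A triangle is a set of three edges $\{\{u,v\},\{v,w\},\{w,u\}\}$ with $u,v,w$ distinct. Reservoir sampling with capacity $M$: the sample starts empty; at time $s$, if $s\le M$ the edge $e_s$ is inserted; if $s>M$, with probability $M/s$ an edge chosen uniformly at random from the sample is removed and $e_s$ is inserted, otherwise the sample is unchanged. *)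

From mathcomp Require Import all_boot all_order all_algebra.
Set Implicit Arguments. Unset Strict Implicit. Unset Printing Implicit Defensive.
Import Order.TTheory GRing.Theory Num.Theory.

Section Stream.
Variable V : finType.

(* An edge is a 2-element vertex set; the stream is e : nat -> {set V},
   e s = e_s for s >= 1. *)
Definition is_edge (x : {set V}) : bool := #|x| == 2.

Definition valid_stream (e : nat -> {set V}) (t : nat) : Prop :=
  (forall s, 1 <= s <= t -> is_edge (e s)) /\
  (forall s s', 1 <= s <= t -> 1 <= s' <= t -> e s = e s' -> s = s').

Definition graph_edges (e : nat -> {set V}) (t : nat) : {set {set V}} :=
  [set x | x \in [seq e s | s <- iota 1 t]].

Definition is_triangle (T : {set {set V}}) : bool :=
  [exists u, exists v, exists w,
     [&& u != v, v != w, w != u &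
      T == [set [set u; v]; [set v; w]; [set w; u]]]].

Definition rem_at (T : Type) (k : nat) (S : seq T) : seq T :=
  take k S ++ drop k.+1 S.

(* Reservoir sampling with capacity M, driven by a realization of its
   random choices: acc s = outcome of the coin with probability M/s at time s,
   idx s = index (uniform in the current sample of size M) of the removed edge. *)
Definition res_step (e : nat -> {set V}) (M : nat) (acc : nat -> bool)
  (idx : nat -> nat) (s : nat) (S : seq {set V}) : seq {set V} :=
  if s <= M then rcons S (e s)
  else if acc s then rcons (rem_at (idx s) S) (e s) else S.

Fixpoint reservoir (e : nat -> {set V}) (M : nat) (acc : nat -> bool)
  (idx : nat -> nat) (t : nat) : seq {set V} :=
  match t with
  | 0 => [::]
  | t'.+1 => res_step e M acc idx t'.+1 (reservoir e M acc idx t')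
  end.

Definition tau (e : nat -> {set V}) (M : nat) (acc : nat -> bool)
  (idx : nat -> nat) (t : nat) : nat :=
  #|[set T : {set {set V}} | [&& is_triangle T, T \subset graph_edges e t &
      T \subset [set x | x \in reservoir e M acc idx t]]]|.

End Stream.

Local Open Scope ring_scope.

Definition phi (R : realFieldType) (M t tau : nat) : R :=
  (t * (t - 1) * (t - 2))%:R / (M * (M - 1) * (M - 2))%:R * tau%:R.

Definition phi_mix (R : realFieldType) (M t tau : nat) : R :=
  (t%:R / M%:R) ^+ 3 * tau%:R.

From mathcomp Require Import all_boot all_order all_algebra.
From mathcomp Require Import ring lra.
Import Order.TTheory GRing.Theory Num.Theory.
Local Open Scope ring_scope.

(* Their
   difference is T(T-m)(3mT-2T-2m) / m^3(m-1)(m-2), which is nonnegative, and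
   4 T^3 (m-1) minus its numerator is T(T^2(m-2) + m^2(3T-2)) >= 0. *)

Section FallingRatio.
Context {R : realFieldType}.

Definition falling3 (x : R) : R := x * (x - 1) * (x - 2).

Lemma natr_falling3 (n : nat) : (2 <= n)%N ->
  (n * (n - 1) * (n - 2))%:R = falling3 n%:R.
Proof. by move=> n2; rewrite /falling3 !natrM !natrB // (leq_trans _ n2). Qed.

Lemma falling3_gt0 (x : R) : 2 < x -> 0 < falling3 x.
Proof. by move=> x_gt2; rewrite /falling3 !mulr_gt0 //; lra. Qed.

Lemma falling3_ratio_subE (m T : R) : 2 < m ->
  falling3 T / falling3 m - (T / m) ^+ 3 =
  T * (T - m) * (3 * m * T - 2 * T - 2 * m) / (m ^+ 2 * falling3 m).
Proof.
move=> m_gt2; rewrite /falling3; field.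
by apply/and3P; split; apply/eqP; lra.
Qed.

Lemma falling3_ratio_ge_cube (m T : R) : 2 < m -> m <= T ->
  (T / m) ^+ 3 <= falling3 T / falling3 m.
Proof.
move=> m_gt2 m_leT; rewrite -subr_ge0 falling3_ratio_subE //.
apply: divr_ge0; last by rewrite ltW // mulr_gt0 ?exprn_gt0 ?falling3_gt0 //; lra.
by apply: mulr_ge0; [apply: mulr_ge0 | ]; nra.
Qed.

Lemma falling3_ratio_sub_cube_le (m T : R) : 2 < m -> m <= T ->
  falling3 T / falling3 m - (T / m) ^+ 3 <= (T / m) ^+ 3 * (4 / (m - 2)).
Proof.
move=> m_gt2 m_leT.
have denom_gt0 : 0 < m ^+ 2 * falling3 m.
  by rewrite mulr_gt0 ?exprn_gt0 ?falling3_gt0 //; lra.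
have -> : (T / m) ^+ 3 * (4 / (m - 2)) =
    4 * T ^+ 3 * (m - 1) / (m ^+ 2 * falling3 m).
  by rewrite /falling3; field; apply/and3P; split; apply/eqP; lra.
rewrite falling3_ratio_subE // ler_pM2r ?invr_gt0 //.
have -> : 4 * T ^+ 3 * (m - 1) = T * (T - m) * (3 * m * T - 2 * T - 2 * m)
    + T * (T ^+ 2 * (m - 2) + m ^+ 2 * (3 * T - 2)) by ring.
rewrite lerDl; apply: mulr_ge0; first lra.
by apply: addr_ge0; apply: mulr_ge0; rewrite ?sqr_ge0 //; lra.
Qed.

End FallingRatio.

Theorem lemma4p10 (R : realFieldType) (V : finType) (e : nat -> {set V})
  (M : nat) (acc : nat -> bool) (idx : nat -> nat) (t : nat) :
  (6 <= M)%N ->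
  (M < t)%N ->
  valid_stream e t ->
  (forall s, (M < s)%N -> (idx s < M)%N) ->
  let tt := tau e M acc idx t in
  `|phi R M t tt - phi_mix R M t tt| <=
    phi_mix R M t tt * (4%:R / (M - 2)%:R).
Proof.
move=> M_ge6 M_lt_t _ _ /=; set tt := tau _ _ _ _ _.
have M_gt2 : 2 < M%:R :> R by rewrite ltr_nat (leq_trans _ M_ge6).
have M_le_t : M%:R <= t%:R :> R by rewrite ler_nat ltnW.
have M_ge2 : (2 <= M)%N by rewrite (leq_trans _ M_ge6).
rewrite /phi /phi_mix !natr_falling3 ?(leq_trans M_ge2 (ltnW M_lt_t)) //.
rewrite natrB // -mulrBl ger0_norm; last first.
  by rewrite mulr_ge0 // subr_ge0 falling3_ratio_ge_cube.
rewrite [X in _ <= X]mulrAC.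
by apply: ler_wpM2r => //; apply: falling3_ratio_sub_cube_le.
Qed.
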